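(* Let $X$ be a countable set and let $w$ be an essentially locally finite weight on $X$ such that $(X,\delta_w)$ is complete. Then for all $x,y\in X$ there exists a $w$-geodesic from $x$ to $y$.
   Context: A weight on $X$ is a symmetric function $w:X\times X\to[0,\infty]$ with $w(x,y)=0$ iff $x=y$; it is essentially locally finite if $\#\{y\in X\mid w(x,y)<R\}<\infty$ for all $x\in X$, $R>0$. A path from $x$ to $y$ is a finite sequence $(x_0,\dots,x_n)$ of pairwise distinct elements of $X$ with $x_0=x$, $x_n=y$; its $w$-length is $l_w=\sum_{i=1}^n w(x_{i-1},x_i)$, and $\delta_w(x,y)$ is the infimum of $l_w$ over all paths from $x$ to $y$ (a pseudo metric, possibly taking the value $\infty$). A $w$-geodesic from $x$ to $y$ is a path $\gamma$ from $x$ to $y$ with $l_w(\gamma)=\delta_w(x,y)$. *)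

(* Weights take values in \bar R for an
   arbitrary realType R (the extended reals [0, +oo] are the nonnegative part). *)
From HB Require Import structures.
From mathcomp Require Import all_boot all_order all_algebra.
From mathcomp Require Import all_classical all_reals all_analysis.
Set Implicit Arguments. Unset Strict Implicit. Unset Printing Implicit Defensive.
Import Order.TTheory GRing.Theory Num.Theory.
Local Open Scope classical_set_scope.
Local Open Scope ring_scope.
Local Open Scope ereal_scope.

Section Weights.
Context {R : realType} {X : countType}.
Implicit Types (w : X -> X -> \bar R) (x y : X) (p : seq X).

Definition is_weight w : Prop :=
  [/\ forall x y, w x y = w y x,
      forall x y, 0 <= w x y
    & forall x y, w x y = 0 <-> x = y].

Definition ess_locally_finite w : Prop :=
  forall x (r : R), (0 < r)%R -> finite_set [set y | w x y < r%:E].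

Definition is_path x y p : Prop :=
  [/\ p != [::], head x p = x, last x p = y & uniq p].

Fixpoint lw_from w (a : X) (s : seq X) : \bar R :=
  match s with
  | [::] => 0
  | b :: s' => w a b + lw_from w b s'
  end.

Definition lw w p : \bar R :=
  match p with
  | [::] => 0
  | a :: s => lw_from w a s
  end.

Definition delta w x y : \bar R :=
  ereal_inf [set lw w p | p in [set p | is_path x y p]].

Definition delta_cauchy w (u : nat -> X) : Prop :=
  forall e : R, (0 < e)%R -> exists N : nat,
    forall n m : nat, (N <= n)%N -> (N <= m)%N -> delta w (u n) (u m) < e%:E.

Definition delta_converges w (u : nat -> X) (x : X) : Prop :=
  forall e : R, (0 < e)%R -> exists N : nat,
    forall n : nat, (N <= n)%N -> delta w (u n) x < e%:E.

Definition delta_complete w : Prop :=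
  forall u : nat -> X, delta_cauchy w u -> exists x, delta_converges w u x.

Definition is_geodesic w x y p : Prop :=
  is_path x y p /\ lw w p = delta w x y.

End Weights.

From HB Require Import structures.
From mathcomp Require Import all_boot all_order all_algebra.
From mathcomp Require Import all_classical all_reals all_analysis.
Set Implicit Arguments. Unset Strict Implicit. Unset Printing Implicit Defensive.
Import Order.TTheory GRing.Theory Num.Theory.
Local Open Scope classical_set_scope.
Local Open Scope ring_scope.
Local Open Scope ereal_scope.

(* The simple sequences ending at y of w-length at most L are finitely many,
   by a Koenig's lemma argument: otherwise, since every point has only
   finitely many w-neighbours within distance L + 1, there is an infinite ray
   y = v 0, v 1, v 2, ... whose reversed initial segments [:: v n; ...; v 0]
   are all simple of length at most L.  These lengths increase and are
   bounded, so (v n) is delta_w-Cauchy and converges by completeness.  But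
   local finiteness makes every point delta_w-isolated, so v is eventually
   constant, contradicting simplicity.  Hence, when delta_w(x, y) is finite,
   the infimum defining it ranges over finitely many paths of length at most
   delta_w(x, y) + 1 and is attained. *)

Section PathLength.
Context {R : realType} {X : countType} (w : X -> X -> \bar R).

Lemma lw_from_cat a s t :
  lw_from w a (s ++ t) = lw_from w a s + lw_from w (last a s) t.
Proof. by elim: s a => [|b s IH] a /=; rewrite ?add0e // IH addeA. Qed.

Lemma lw_cat s c t : lw w (s ++ c :: t) = lw w (rcons s c) + lw w (c :: t).
Proof.
case: s => [|a s]; first by rewrite /= add0e.
by rewrite cat_cons -cat_rcons /= lw_from_cat last_rcons.
Qed.

Hypothesis wge0 : forall x y, 0 <= w x y.

Lemma lw_ge0 p : 0 <= lw w p.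
Proof. by case: p => // a s; elim: s a => //= b s IH a; rewrite adde_ge0. Qed.

Lemma lw_catl_le s c t : lw w (c :: t) <= lw w (s ++ c :: t).
Proof. by rewrite lw_cat leeDr ?lw_ge0. Qed.

Hypothesis wsym : forall x y, w x y = w y x.

Lemma lw_from_rev a s :
  lw_from w a s = lw_from w (last a s) (rev (belast a s)).
Proof.
elim: s a => [|b s IH] a //=.
rewrite rev_cons -cats1 lw_from_cat IH /= adde0 addeC wsym.
congr (_ + w _ a).
by case: s {IH} => [|c s]; rewrite /= ?rev_cons ?last_rcons.
Qed.

Lemma lw_rev p : lw w (rev p) = lw w p.
Proof.
by case: p => // a s; rewrite [in LHS]lastI rev_rcons /= -lw_from_rev.
Qed.

End PathLength.

Section Delta.
Context {R : realType} {X : countType} (w : X -> X -> \bar R).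
Implicit Types (x y : X) (p : seq X).

Lemma is_path_rev x y p : is_path x y p -> is_path y x (rev p).
Proof.
case: p => [[/eqP]|a s [_ /= -> <- us]] //; split; rewrite ?rev_uniq //.
- by rewrite rev_cons -size_eq0 size_rcons.
- by rewrite lastI rev_rcons.
- by rewrite rev_cons last_rcons.
Qed.

Lemma is_path_exists x y : exists p, is_path x y p.
Proof.
have [<-|xy] := eqVneq x y; first by exists [:: x].
by exists [:: x; y]; split; rewrite //= inE xy.
Qed.

Lemma delta_le_lw x y p : is_path x y p -> delta w x y <= lw w p.
Proof. by move=> xyp; apply: ereal_inf_lbound; exists p. Qed.

Hypothesis wge0 : forall x y, 0 <= w x y.

Lemma delta_ge0 x y : 0 <= delta w x y.
Proof. by apply: le_ereal_inf_tmp => _ [p _ <-]; apply: lw_ge0. Qed.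

Hypothesis wsym : forall x y, w x y = w y x.

Lemma delta_sym x y : delta w x y = delta w y x.
Proof.
suff le_delta_sym x' y' : delta w y' x' <= delta w x' y'.
  by apply: le_anti; rewrite !le_delta_sym.
apply: le_ereal_inf_tmp => _ [p /is_path_rev yxp <-].
by rewrite -(lw_rev wsym); apply: delta_le_lw.
Qed.

End Delta.

Lemma seq_argmin {T : eqType} {d} {U : orderType d} (f : T -> U)
    (s : seq T) a0 :
  a0 \in s -> exists2 a, a \in s & forall b, b \in s -> (f a <= f b)%O.
Proof.
elim: s a0 => [//|c [|c' s] IH] a0 _.
  by exists c => [|b]; rewrite ?mem_seq1 // => /eqP ->.
have [a ain amin] := IH c' (mem_head _ _); have [fca|fac] := leP (f c) (f a).
  exists c => [|b]; first exact: mem_head.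
  by rewrite inE => /predU1P[->//|/amin]; apply: le_trans.
exists a => [|b]; first by rewrite inE ain orbT.
by rewrite inE => /predU1P[->|/amin//]; apply: ltW.
Qed.

Lemma finite_set_argmin {T : choiceType} {d} {U : orderType d} (f : T -> U)
    (A : set T) :
  finite_set A -> A !=set0 -> exists2 a, A a & forall b, A b -> (f a <= f b)%O.
Proof.
by move=> /finite_fsetP[F ->] [a0 /(seq_argmin f)[a Fa amin]]; exists a.
Qed.

Section Isolation.
Context {R : realType} {X : countType} (w : X -> X -> \bar R).
Hypotheses (wW : is_weight w) (wF : ess_locally_finite w).

Lemma weight_bounded_away z :
  exists2 e : R, (0 < e)%R & forall b, b != z -> e%:E <= w z b.
Proof.
have [_ wge0 w0] := wW.
pose F := [set b | w z b < 1%:E /\ b != z].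
have [F0|/set0P FN0] := eqVneq F set0.
  exists 1%R => // b bz; rewrite leNgt; apply/negP => wb1.
  by have : F b by []; rewrite F0.
have Ffin : finite_set F by apply: sub_finite_set (wF z ltr01) => b [].
have [b0 [wb0 b0z] b0min] := finite_set_argmin (w z) Ffin FN0.
have wb0_gt0 : 0 < w z b0.
  by rewrite lt_def wge0 andbT; apply: contra b0z => /eqP/w0 <-.
have wb0E : w z b0 = (fine (w z b0))%:E.
  by rewrite fineK // ge0_fin_numE ?wge0 // (lt_trans wb0) ?ltey.
exists (Num.min 1 (fine (w z b0)))%R => [|b bz].
  by rewrite lt_min ltr01 fine_gt0 // wb0_gt0 (lt_trans wb0) ?ltey.
have [wb1|] := ltP (w z b) 1%:E.
  apply: le_trans (b0min b (conj wb1 bz)).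
  by rewrite [X in _ <= X]wb0E lee_fin ge_min lexx orbT.
by apply: le_trans; rewrite lee_fin ge_min lexx.
Qed.

Lemma delta_bounded_away z :
  exists2 e : R, (0 < e)%R & forall a, a != z -> e%:E <= delta w z a.
Proof.
have [e e0 he] := weight_bounded_away z; exists e => // a az.
have [_ wge0 _] := wW.
apply: le_ereal_inf_tmp => _ [p [p0 zp ap up] <-].
case: p p0 zp ap up => [|z' [|b t]] //= _ ->.
  by move=> za; rewrite za eqxx in az.
move=> _; rewrite inE negb_or => /andP[/andP[zb _] _].
apply: le_trans (he b _) _; first by rewrite eq_sym.
by rewrite leeDl // (lw_ge0 wge0 (b :: t)).
Qed.

Lemma delta_converges_eventually_eq u z :
  delta_converges w u z -> exists N, forall n, (N <= n)%N -> u n = z.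
Proof.
have [e e0 he] := delta_bounded_away z; have [wsym _ _] := wW.
move=> /(_ e e0)[N uN]; exists N => n Nn; apply/eqP.
by apply: contraTT (uN n Nn) => unz; rewrite -leNgt -(delta_sym wsym) he.
Qed.

End Isolation.

Lemma nondecreasing_bounded_increments {R : realType} (l : R ^nat) (L : R) :
  nondecreasing_seq l -> (forall n, (l n <= L)%R) ->
  forall e : R, (0 < e)%R ->
    exists N, forall n m, (N <= n)%N -> (n <= m)%N -> (l m - l n < e)%R.
Proof.
move=> l_nd lL e e0.
have l_sup : has_sup (range l).
  by split; [exists (l 0%N), 0%N | exists L => _ [n _ <-]].
have [_ [N _ <-] lN] := sup_adherent e0 l_sup.
exists N => n m Nn nm.
have lm_sup : (l m <= sup (range l))%R.
  by apply: sup_upper_bound => //; exists m.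
rewrite ltrBlDr; apply: le_lt_trans lm_sup _.
move: lN; rewrite ltrBlDr addrC => /lt_le_trans; apply.
by rewrite lerD2l l_nd.
Qed.

Section BoundedExtensions.
Context {R : realType} {X : countType} (w : X -> X -> \bar R).
Hypotheses (wW : is_weight w) (wF : ess_locally_finite w).
Variable L : R.

Definition extensions (q : seq X) : set (seq X) :=
  [set p | [/\ uniq p, lw w p <= L%:E & exists s, p = s ++ q]].

Lemma nonempty_extensions q : extensions q !=set0 -> uniq q /\ lw w q <= L%:E.
Proof.
have [_ wge0 _] := wW.
move=> [p [+ pL [s ps]]]; rewrite ps cat_uniq in pL * => /and3P[_ _ uq].
split=> //; apply: le_trans pL.
by case: q {ps uq} => [|c q]; [apply: lw_ge0 | apply: lw_catl_le].
Qed.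

Lemma infinite_extensions_cons c q : infinite_set (extensions (c :: q)) ->
  exists a, infinite_set (extensions (a :: c :: q)).
Proof.
have [wsym wge0 _] := wW.
move=> ext_inf; apply: contrapT => /forallNP ext_fin.
have [_ cqL] := nonempty_extensions (infinite_setN0 ext_inf).
have L0 : (0 <= L)%R by rewrite -lee_fin (le_trans (lw_ge0 wge0 _) cqL).
(* an extension ... ++ a :: c :: q of length at most L has w c a <= L *)
pose near := [set a | w c a < (L + 1)%:E].
have near_fin : finite_set near by apply: wF; rewrite ltr_wpDl.
apply: ext_inf; apply: (@sub_finite_set _ _
  ([set c :: q] `|` \bigcup_(a in near) extensions (a :: c :: q))).
  move=> p [up pL [s ps]].
  case/lastP: s ps => [|s a] ps; [by left | right; exists a].
    have acp : w a c <= lw w p.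
      rewrite ps cat_rcons; apply: le_trans (lw_catl_le wge0 _ _ _).
      by rewrite /= leeDl ?(lw_ge0 wge0 (c :: q)).
    by rewrite /near /= wsym (le_lt_trans (le_trans acp pL)) // lte_fin ltrDl.
  by split=> //; exists s; rewrite ps cat_rcons.
rewrite finite_setU; split; first exact: finite_set1.
by apply: bigcup_finite => // a _; apply: contrapT (ext_fin a).
Qed.

Fixpoint trace (v : nat -> X) n : seq X :=
  if n is m.+1 then v n :: trace v m else [:: v 0%N].

Lemma traceE v n : trace v n = v n :: behead (trace v n).
Proof. by case: n. Qed.

Lemma trace_suffix v n m : (n <= m)%N -> exists s, trace v m = s ++ trace v n.
Proof.
move=> /subnK <-; elim: (m - n)%N => [|k [s IH]]; first by exists [::].
by exists (v (k + n).+1 :: s); rewrite addSn /= IH.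
Qed.

Lemma trace_delta_le v n m : (n <= m)%N -> uniq (trace v m) ->
  delta w (v n) (v m) + lw w (trace v n) <= lw w (trace v m).
Proof.
have [wsym _ _] := wW.
move=> /(trace_suffix v)[s vm].
rewrite vm traceE lw_cat -cat_rcons cat_uniq.
case/and3P=> us _ _; apply: leeD (lexx _); rewrite (delta_sym wsym).
apply: delta_le_lw; split; rewrite ?last_rcons //.
- by rewrite -size_eq0 size_rcons.
- by have := traceE v m; rewrite vm traceE; case: s {vm us} => [|a s] [].
Qed.

Lemma bounded_uniq_trace_cauchy v :
  (forall n, uniq (trace v n)) -> (forall n, lw w (trace v n) <= L%:E) ->
  delta_cauchy w v.
Proof.
have [wsym wge0 _] := wW.
move=> v_uniq vL; pose l n := fine (lw w (trace v n)).
have lE n : lw w (trace v n) = (l n)%:E.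
  by rewrite fineK // ge0_fin_numE ?lw_ge0 // (le_lt_trans (vL n)) ?ltey.
have delta_le n m : (n <= m)%N -> delta w (v n) (v m) <= (l m - l n)%:E.
  by move=> nm; rewrite EFinB leeBrDr // -!lE trace_delta_le.
have l_nd : nondecreasing_seq l.
  move=> n m nm; rewrite -lee_fin -!lE.
  by apply: le_trans (trace_delta_le nm (v_uniq m)); rewrite leeDr ?delta_ge0.
have lL n : (l n <= L)%R by rewrite -lee_fin -lE.
move=> e /(nondecreasing_bounded_increments l_nd lL)[N lN].
exists N => n m Nn Nm; wlog nm : n m Nn Nm / (n <= m)%N.
  move=> le_delta; case/orP: (leq_total n m) => /le_delta; first exact.
  by rewrite (delta_sym wsym); apply.
by apply: le_lt_trans (delta_le _ _ nm) _; rewrite lte_fin lN.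
Qed.

Lemma infinite_extensions_trace y : infinite_set (extensions [:: y]) ->
  exists v, forall n, infinite_set (extensions (trace v n)).
Proof.
move=> y_inf.
pose next q := xget y [set a | infinite_set (extensions (a :: q))].
pose qs n := iter n (fun q => next q :: q) [:: y].
exists (fun n => head y (qs n)).
suff qs_trace n : trace (fun n => head y (qs n)) n = qs n /\
                  infinite_set (extensions (qs n)).
  by move=> n; have [->] := qs_trace n.
elim: n => [//|n [tn qn_inf]]; rewrite /= tn; split=> //.
have [c [q qE]] : exists c q, qs n = c :: q by rewrite -tn traceE; do 2!eexists.
by rewrite qE in qn_inf *; apply: xgetPex (infinite_extensions_cons qn_inf).
Qed.

Hypothesis wC : delta_complete w.

Lemma bounded_trace_not_uniq v :
  (forall n, lw w (trace v n) <= L%:E) -> ~ (forall n, uniq (trace v n)).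
Proof.
move=> vL v_uniq.
have [z] := wC (bounded_uniq_trace_cauchy v_uniq vL).
move=> /(delta_converges_eventually_eq wW wF)[N vz].
by have := v_uniq N.+1; rewrite /= traceE inE vz // vz // eqxx.
Qed.

Lemma finite_extensions y : finite_set (extensions [:: y]).
Proof.
apply: contrapT => /infinite_extensions_trace[v v_inf].
have v_ext n := nonempty_extensions (infinite_setN0 (v_inf n)).
by apply: (bounded_trace_not_uniq (fun n => (v_ext n).2)) => n; case: (v_ext n).
Qed.

End BoundedExtensions.

Lemma ereal_inf_attained {R : realType} {T : choiceType} (f : T -> \bar R)
    (A : set T) (L : \bar R) :
  finite_set [set a | A a /\ f a <= L] -> ereal_inf (f @` A) < L ->
  exists2 a, A a & f a = ereal_inf (f @` A).
Proof.
move=> sub_fin /ereal_inf_lt[_ [a0 Aa0 <-] fa0L].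
have [|a [Aa faL] amin] := finite_set_argmin f sub_fin.
  by exists a0; split=> //; apply: ltW.
exists a => //; apply: le_anti.
rewrite ereal_inf_lbound ?andbT /=; last by exists a.
apply: le_ereal_inf_tmp => _ [b Ab <-].
have [fbL|/ltW Lfb] := leP (f b) L; first exact: amin.
exact: le_trans faL Lfb.
Qed.

Theorem lemma2p4 (R : realType) (X : countType) (w : X -> X -> \bar R) :
  is_weight w -> ess_locally_finite w -> delta_complete w ->
  forall x y : X, exists p : seq X, is_geodesic w x y p.
Proof.
move=> wW wF wC x y; have [_ wge0 _] := wW.
have [dinf|dfin] := eqVneq (delta w x y) +oo.
  have [p xyp] := is_path_exists x y; exists p; split=> //.
  by rewrite dinf; apply/eqP; rewrite -leye_eq -dinf delta_le_lw.
pose r := fine (delta w x y).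
have dE : delta w x y = r%:E by rewrite fineK // ge0_fin_numE ?delta_ge0 ?ltey.
have short_paths_fin :
    finite_set [set p | is_path x y p /\ lw w p <= (r + 1)%:E].
  apply: sub_finite_set (finite_extensions wW wF (r + 1) wC y).
  move=> p [[p0 _ py up] pL]; split=> //.
  case/lastP: p p0 py {up pL} => [//|s a] _; rewrite last_rcons => ->.
  by exists s; rewrite cats1.
have delta_lt : delta w x y < (r + 1)%:E by rewrite dE lte_fin ltrDl.
by have [p xyp pE] := ereal_inf_attained short_paths_fin delta_lt; exists p.
Qed.
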